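(* Let $\tau\ge1$ and two candidates $P,Q$. If $P$ beats $Q$ under Weighted Majority Rule 3, then $SC(P)\le\tau\,SC(Q)+2\,SC(Z)$ for every point $Z$ of the metric space.
   Context: Voters $N$ and candidates are points of an arbitrary metric space $(X,d)$; $SC(Y)=\sum_{i\in N}d(i,Y)$ for $Y\in X$. Let $A=\{i: d(i,Q)/d(i,P)\ge\tau\}$ and $B=\{j: d(j,P)/d(j,Q)\ge\tau\}$. Weighted Majority Rule 3 selects $P$ over $Q$ iff $|A|\ge|B|$ (all other voters are ignored). *)

From Stdlib Require Import Reals Lra List.
Open Scope R_scope.

Record is_metric (X : Type) (d : X -> X -> R) : Prop := {
  metric_nonneg : forall x y, 0 <= d x y;
  metric_refl   : forall x, d x x = 0;
  metric_sep    : forall x y, d x y = 0 -> x = y;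
  metric_sym    : forall x y, d x y = d y x;
  metric_tri    : forall x y z, d x z <= d x y + d y z
}.

(* Voters N are given as a finite list (multiset) of points of X. *)
Definition SC {X : Type} (d : X -> X -> R) (N : list X) (Y : X) : R :=
  fold_right (fun i acc => d i Y + acc) 0 N.

(* Voter i satisfies d(i,Q)/d(i,P) >= tau, written cross-multiplied:
   tau * d(i,P) <= d(i,Q). *)
Definition ratio_ge {X : Type} (d : X -> X -> R) (tau : R) (P Q i : X) : bool :=
  if Rle_dec (tau * d i P) (d i Q) then true else false.

Definition setA {X : Type} (d : X -> X -> R) (tau : R) (N : list X) (P Q : X) :=
  filter (ratio_ge d tau P Q) N.
Definition setB {X : Type} (d : X -> X -> R) (tau : R) (N : list X) (P Q : X) :=
  filter (ratio_ge d tau Q P) N.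

Definition WMR3_selects {X : Type} (d : X -> X -> R) (tau : R) (N : list X) (P Q : X) : Prop :=
  (length (setB d tau N P Q) <= length (setA d tau N P Q))%nat.

From Stdlib Require Import Reals Lra Lia List Bool.
Open Scope R_scope.

(* Fix Z and give every voter i the slack
     s(i) = tau d(i,Q) + 2 d(i,Z) - d(i,P),
   so that the claim is exactly 0 <= sum_i s(i).
   - Metric part: s(i) >= 0 unless i is in B \ A (for i in A because
     d(i,P) <= d(i,Q) <= tau d(i,Q), outside B by definition of B), and
     s(a) + s(b) >= 0 for every a in A and b in B (two triangle
     inequalities through Z).
   - Counting part: |B| <= |A| gives |B \ A| <= |A \ B|, so the voters of
     B \ A can be matched injectively with voters of A \ B; every matched
     pair has nonnegative total slack and all other voters have
     nonnegative slack. *)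

Definition sumf {X : Type} (f : X -> R) (l : list X) : R :=
  fold_right (fun i acc => f i + acc) 0 l.

Section ListSums.

Variable X : Type.
Implicit Types (f : X -> R) (l : list X) (p q : X -> bool).

Lemma sumf_nonneg f l : (forall x, In x l -> 0 <= f x) -> 0 <= sumf f l.
Proof.
  induction l as [|x l IH]; intros Hf; simpl; [lra|].
  assert (0 <= f x) by (apply Hf; left; reflexivity).
  assert (0 <= sumf f l) by (apply IH; intros y Hy; apply Hf; right; exact Hy).
  lra.
Qed.

Lemma sumf_split3 f p q l :
  (forall x, p x = true -> q x = false) ->
  sumf f l = sumf f (filter p l) + sumf f (filter q l)
             + sumf f (filter (fun x => negb (p x || q x)) l).
Proof.
  intros Hdisj; induction l as [|x l IH]; simpl; [lra|].
  destruct (p x) eqn:Ep.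
  - rewrite (Hdisj x Ep); simpl; rewrite IH; lra.
  - destruct (q x); simpl; rewrite IH; lra.
Qed.

Lemma sumf_matching f (Lp Ln : list X) :
  (length Ln <= length Lp)%nat ->
  (forall x, In x Lp -> 0 <= f x) ->
  (forall x y, In x Lp -> In y Ln -> 0 <= f x + f y) ->
  0 <= sumf f Lp + sumf f Ln.
Proof.
  revert Lp; induction Ln as [|n Ln IH]; intros Lp Hlen Hpos Hpair.
  - simpl; pose proof (sumf_nonneg f Lp Hpos); lra.
  - destruct Lp as [|x Lp]; simpl in Hlen; [lia|].
    assert (Hpn : 0 <= f x + f n) by (apply Hpair; left; reflexivity).
    assert (Hrest : 0 <= sumf f Lp + sumf f Ln).
    { apply IH; [lia| |].
      - intros y Hy; apply Hpos; right; exact Hy.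
      - intros y z Hy Hz; apply Hpair; right; assumption. }
    simpl; lra.
Qed.

Lemma length_filter_split p q l :
  length (filter p l)
  = (length (filter (fun x => p x && q x) l)
     + length (filter (fun x => p x && negb (q x)) l))%nat.
Proof.
  induction l as [|x l IH]; simpl; [reflexivity|].
  destruct (p x), (q x); simpl; rewrite IH; lia.
Qed.

(* If q holds at most as often as p, then "q but not p" holds at most as
   often as "p but not q": the common part cancels. *)
Lemma length_filter_diff p q l :
  (length (filter q l) <= length (filter p l))%nat ->
  (length (filter (fun x => q x && negb (p x)) l)
   <= length (filter (fun x => p x && negb (q x)) l))%nat.
Proof.
  rewrite (length_filter_split p q), (length_filter_split q p).
  rewrite (filter_ext (fun x => q x && p x) (fun x => p x && q x))
    by (intros; apply andb_comm).
  lia.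
Qed.

End ListSums.

Lemma ratio_ge_true {X : Type} (d : X -> X -> R) (tau : R) (P Q i : X) :
  ratio_ge d tau P Q i = true -> tau * d i P <= d i Q.
Proof. unfold ratio_ge; destruct Rle_dec; easy. Qed.

Lemma ratio_ge_false {X : Type} (d : X -> X -> R) (tau : R) (P Q i : X) :
  ratio_ge d tau P Q i = false -> ~ (tau * d i P <= d i Q).
Proof. unfold ratio_ge; destruct Rle_dec; easy. Qed.

Section VoterSlack.

Variables (X : Type) (d : X -> X -> R).
Hypothesis Hd : is_metric X d.
Variable tau : R.
Hypothesis Htau : 1 <= tau.
Variables (P Q Z : X).

Definition slack (i : X) : R := tau * d i Q + 2 * d i Z - d i P.

Lemma sumf_slack (N : list X) :
  sumf slack N = tau * SC d N Q + 2 * SC d N Z - SC d N P.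
Proof.
  induction N as [|i N IH]; unfold sumf, SC in *; simpl; [lra|].
  rewrite IH; unfold slack; lra.
Qed.

(* A voter of A has nonnegative slack: d(i,P) <= tau d(i,P) <= d(i,Q)
   <= tau d(i,Q). *)
Lemma slack_nonneg_A (i : X) : tau * d i P <= d i Q -> 0 <= slack i.
Proof.
  intros HA; unfold slack.
  pose proof (metric_nonneg X d Hd i P); pose proof (metric_nonneg X d Hd i Q).
  pose proof (metric_nonneg X d Hd i Z).
  assert (d i P <= tau * d i P) by nra.
  assert (d i Q <= tau * d i Q) by nra.
  lra.
Qed.

(* A voter outside B has nonnegative slack, since d(i,P) < tau d(i,Q). *)
Lemma slack_nonneg_notB (i : X) : ~ (tau * d i Q <= d i P) -> 0 <= slack i.
Proof.
  intros HB; unfold slack; pose proof (metric_nonneg X d Hd i Z); lra.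
Qed.

(* A voter a of A and a voter b of B together have nonnegative slack:
   d(b,P) <= d(b,Z) + d(Z,a) + d(a,P) and
   d(a,P) <= d(a,Q) <= d(a,Z) + d(Z,b) + d(b,Q). *)
Lemma slack_pair_nonneg (a b : X) :
  tau * d a P <= d a Q -> tau * d b Q <= d b P -> 0 <= slack a + slack b.
Proof.
  intros HA HB; unfold slack.
  pose proof (metric_nonneg X d Hd a P); pose proof (metric_nonneg X d Hd b Q).
  assert (d a P <= tau * d a P) by nra.
  assert (d a Q <= tau * d a Q) by nra.
  assert (d b Q <= tau * d b Q) by nra.
  pose proof (metric_tri X d Hd b Z P); pose proof (metric_tri X d Hd Z a P).
  pose proof (metric_tri X d Hd a Z Q); pose proof (metric_tri X d Hd Z b Q).
  rewrite (metric_sym X d Hd Z a), (metric_sym X d Hd Z b) in *.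
  lra.
Qed.

End VoterSlack.

Theorem mainTheorem16 (X : Type) (d : X -> X -> R) (Hd : is_metric X d)
  (N : list X) (tau : R) (Htau : 1 <= tau) (P Q : X)
  (Hwin : WMR3_selects d tau N P Q) :
  forall Z : X, SC d N P <= tau * SC d N Q + 2 * SC d N Z.
Proof.
  intros Z.
  set (inA := ratio_ge d tau P Q); set (inB := ratio_ge d tau Q P).
  set (AnotB := fun x => inA x && negb (inB x)).
  set (BnotA := fun x => inB x && negb (inA x)).
  set (s := slack X d tau P Q Z).
  assert (Hdisj : forall x, AnotB x = true -> BnotA x = false).
  { intros x; unfold AnotB, BnotA; destruct (inA x), (inB x); easy. }
  enough (0 <= sumf s N) by (unfold s in *; rewrite sumf_slack in *; lra).
  rewrite (sumf_split3 X s AnotB BnotA N Hdisj).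
  assert (Hmatch : 0 <= sumf s (filter AnotB N) + sumf s (filter BnotA N)).
  { apply sumf_matching.
    - exact (length_filter_diff X inA inB N Hwin).
    - intros p Hp; apply filter_In in Hp as [_ Hp].
      apply andb_prop in Hp as [HpA _].
      apply slack_nonneg_A; auto; apply ratio_ge_true; exact HpA.
    - intros p n Hp Hn; apply filter_In in Hp as [_ Hp], Hn as [_ Hn].
      apply andb_prop in Hp as [HpA _], Hn as [HnB _].
      apply slack_pair_nonneg; auto; apply ratio_ge_true; assumption. }
  assert (Hrest : 0 <= sumf s (filter (fun x => negb (AnotB x || BnotA x)) N)).
  { apply sumf_nonneg; intros x Hx; apply filter_In in Hx as [_ Hx].
    unfold AnotB, BnotA in Hx.
    destruct (inA x) eqn:HA; [apply slack_nonneg_A, ratio_ge_true; auto|].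
    destruct (inB x) eqn:HB; [discriminate|].
    apply slack_nonneg_notB, ratio_ge_false; auto. }
  lra.
Qed.
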